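(* Let $A$ be a finite-dimensional algebra over an algebraically closed field $\Bbbk$, and let $X$ be a finite-dimensional left $A$-module. Then $\operatorname{NEnd}(X)=\{N\in\operatorname{End}_A(X): N^k=0\text{ for some }k\ge0\}$ is an irreducible algebraic variety. *)

From HB Require Import structures.
From mathcomp Require Import all_boot all_order all_algebra all_field.
From mathcomp Require Import mpoly.
Set Implicit Arguments. Unset Strict Implicit. Unset Printing Implicit Defensive.
Import GRing.Theory.
Local Open Scope ring_scope.

(* A finite-dimensional left A-module X of dimension n over k, given by its
   structure map rho : A -> 'M[k]_n, a unital k-algebra homomorphism. *)
Definition is_module_rep (k : fieldType) (A : falgType k) (n : nat)
  (rho : A -> 'M[k]_n) : Prop :=
  [/\ forall (c : k) (a b : A), rho (c *: a + b) = c *: rho a + rho b,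
      rho 1 = 1%:M
    & forall a b : A, rho (a * b) = rho a *m rho b].

Definition is_End (k : fieldType) (A : falgType k) (n : nat)
  (rho : A -> 'M[k]_n) (N : 'M[k]_n) : Prop :=
  forall a : A, N *m rho a = rho a *m N.

(* matrix powers (valid for every n, including n = 0) *)
Definition mxpow (k : fieldType) (n : nat) (N : 'M[k]_n) (m : nat) : 'M[k]_n :=
  iter m (mulmx N) 1%:M.

Definition NEnd (k : fieldType) (A : falgType k) (n : nat)
  (rho : A -> 'M[k]_n) (N : 'M[k]_n) : Prop :=
  is_End rho N /\ exists m : nat, mxpow N m = 0.

Definition mx_coords (k : fieldType) (n : nat) (M : 'M[k]_n) : 'I_(n * n) -> k :=
  fun i => mxvec M 0 i.

Definition zariski_closed (k : fieldType) (n : nat) (Z : 'M[k]_n -> Prop) : Prop :=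
  exists F : {mpoly k[n * n]} -> Prop,
    forall M, Z M <-> (forall p, F p -> p.@[mx_coords M] = 0).

Definition zariski_irreducible (k : fieldType) (n : nat) (S : 'M[k]_n -> Prop) : Prop :=
  (exists M, S M) /\
  forall Z1 Z2 : 'M[k]_n -> Prop, zariski_closed Z1 -> zariski_closed Z2 ->
    (forall M, S M -> Z1 M \/ Z2 M) ->
    (forall M, S M -> Z1 M) \/ (forall M, S M -> Z2 M).

Definition irreducible_variety (k : fieldType) (n : nat) (S : 'M[k]_n -> Prop) : Prop :=
  zariski_closed S /\ zariski_irreducible S.

From HB Require Import structures.
From mathcomp Require Import all_boot all_order all_algebra all_field.
From mathcomp Require Import mpoly zify.
From Stdlib Require Import Classical.
Set Implicit Arguments. Unset Strict Implicit. Unset Printing Implicit Defensive.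
Import GRing.Theory.
Local Open Scope ring_scope.

(* Let E be a subalgebra of 'M_n over an algebraically closed field.  E has a
   nil section: a subspace L of nilpotent elements of E meeting the conjugacy
   class, under the units of E, of every nilpotent element of E.  By induction
   on n, conjugate E into block lower triangular form along a minimal E-stable
   subspace; by Burnside's theorem the upper-left blocks fill 'M_m.  Either some
   element of E has zero lower-right block and nonzero upper-left block, and
   these upper-left blocks form a nonzero ideal of 'M_m, hence all of it, so L
   can ask for strictly triangular upper-left blocks; or the upper-left block is
   determined by the lower-right one, and L only constrains the latter.
   Every nilpotent of E is then v y adj(v) with v a unit of E and y in L.  Moving
   (v, y) along a segment gives a polynomial curve through any two nilpotents,
   staying in the set wherever det v <> 0.  If two closed sets cover the set and
   neither contains it, polynomials p1, p2 witnessing this make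
   p1 * p2 * det v vanish identically along such a curve, which is absurd. *)

Lemma classic_ex_minn (P : nat -> Prop) :
  (exists n, P n) -> exists2 n, P n & forall m, P m -> (n <= m)%N.
Proof.
case=> n; elim/ltn_ind: n => n IH Pn.
have [[m lt_mn Pm] | no_less] := classic (exists2 m, (m < n)%N & P m).
  exact: IH Pm.
exists n => // m Pm; rewrite leqNgt; apply/negP => lt_mn.
by apply: no_less; exists m.
Qed.

Lemma classic_ex_maxn (P : nat -> Prop) b :
  (exists n, P n) -> (forall n, P n -> (n <= b)%N) ->
  exists2 n, P n & forall m, P m -> (m <= n)%N.
Proof.
move=> [n Pn] le_b.
pose D d := exists2 m, P m & (b - m)%N = d.
have [_ [m Pm <-] min_d] := classic_ex_minn (ex_intro D _ (ex_intro2 _ _ n Pn erefl)).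
exists m => // m' Pm'; have := min_d _ (ex_intro2 _ _ m' Pm' erefl).
by have := le_b _ Pm; have := le_b _ Pm'; lia.
Qed.

Section LinClosed.
Variables (R : pzRingType) (V : lmodType R) (L : V -> Prop).

Definition lin_closed := L 0 /\ forall c u v, L u -> L v -> L (c *: u + v).

Hypothesis linL : lin_closed.

Lemma lin0 : L 0. Proof. by case: linL. Qed.

Lemma lin_comb c u v : L u -> L v -> L (c *: u + v).
Proof. by case: linL => _; apply. Qed.

Lemma linD u v : L u -> L v -> L (u + v).
Proof. by move=> Lu Lv; have := lin_comb 1 Lu Lv; rewrite scale1r. Qed.

Lemma linZ c u : L u -> L (c *: u).
Proof. by move=> Lu; have := lin_comb c Lu lin0; rewrite addr0. Qed.

Lemma linB u v : L u -> L v -> L (u - v).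
Proof. by move=> Lu Lv; rewrite -scaleN1r addrC; apply: lin_comb. Qed.

Lemma lin_sum I (r : seq I) (P : pred I) (F : I -> V) :
  (forall i, P i -> L (F i)) -> L (\sum_(i <- r | P i) F i).
Proof. by move=> LF; apply: (big_ind L lin0 linD). Qed.

End LinClosed.

Lemma lin_closed_rowspace (k : fieldType) n (S : 'rV[k]_n -> Prop) :
  lin_closed S -> exists U : 'M[k]_n, forall v, S v <-> (v <= U)%MS.
Proof.
move=> linS.
pose Ranks r := exists U : 'M[k]_n, \rank U = r /\ forall v, (v <= U)%MS -> S v.
have Ranks0 : Ranks 0%N.
  exists 0; split=> [|v]; first exact: mxrank0.
  by rewrite submx0 => /eqP ->; apply: lin0.
have Ranks_le r : Ranks r -> (r <= n)%N by case=> U [<- _]; apply: rank_leq_col.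
have [_ [U [<- SU]] maxU] := classic_ex_maxn (ex_intro _ _ Ranks0) Ranks_le.
exists U => v; split=> [Sv|]; last exact: SU.
apply: contraT => vNU.
have ltUv : (\rank U < \rank (U + v)%MS)%N.
  rewrite (ltn_leqif (mxrank_leqif_sup (addsmxSl U v))).
  by apply: contra vNU => /(submx_trans (addsmxSr U v)).
suff /maxU : Ranks (\rank (U + v)%MS) by rewrite leqNgt ltUv.
exists (U + v)%MS; split=> // w /sub_addsmxP [[u c] /= ->].
rewrite [c]mx11_scalar mul_scalar_mx addrC.
by apply: lin_comb => //; apply/SU/submxMl.
Qed.

Lemma nonzero_row (k : fieldType) m p (A : 'M[k]_(m, p)) :
  A != 0 -> exists i, row i A != 0.
Proof.
move=> A_neq0; apply/existsP; apply: contraR A_neq0 => /existsPn A0.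
by apply/eqP/row_matrixP => i; rewrite row0; apply/eqP/negbNE/A0.
Qed.

Lemma mxrank_gt0 (k : fieldType) m p (A : 'M[k]_(m, p)) : (0 < \rank A)%N = (A != 0).
Proof. by rewrite lt0n mxrank_eq0. Qed.

Lemma lin_closed_mx_full (k : fieldType) m n (I : 'M[k]_(m, n) -> Prop) :
  lin_closed I -> (forall i j, I (delta_mx i j)) -> forall a, I a.
Proof.
move=> linI Idelta a; rewrite (matrix_sum_delta a).
by apply: (lin_sum linI) => i _; apply: (lin_sum linI) => j _; apply: linZ.
Qed.

Section MxSubalgebra.
Variables (k : fieldType) (n : nat).

Definition mxsubalg (E : 'M[k]_n -> Prop) :=
  [/\ lin_closed E, E 1%:M & forall x y, E x -> E y -> E (x *m y)].

Variables (E : 'M[k]_n -> Prop) (algE : mxsubalg E).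

Lemma mxsubalg_lin : lin_closed E. Proof. by case: algE. Qed.
Lemma mxsubalg1 : E 1%:M. Proof. by case: algE. Qed.
Lemma mxsubalgM x y : E x -> E y -> E (x *m y). Proof. by case: algE => _ _; apply. Qed.

Lemma mxsubalgX x j : E x -> E (x ^+ j).
Proof.
move=> Ex; elim: j => [|j IH]; first exact: mxsubalg1.
by rewrite exprS; apply: mxsubalgM.
Qed.

Lemma mxsubalg_scalar c : E c%:M.
Proof. rewrite -scalemx1; apply: linZ; [exact: mxsubalg_lin | exact: mxsubalg1]. Qed.

End MxSubalgebra.

Lemma mxsubalg_image (k : fieldType) p q (E : 'M[k]_p -> Prop) (f : 'M[k]_p -> 'M[k]_q) :
  mxsubalg E -> f 0 = 0 -> f 1%:M = 1%:M -> (forall c x y, f (c *: x + y) = c *: f x + f y) ->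
  (forall x y, E x -> E y -> f (x *m y) = f x *m f y) ->
  mxsubalg (fun a => exists2 x, E x & f x = a).
Proof.
move=> algE f0 f1 f_comb fM; have linE := mxsubalg_lin algE; split.
- split=> [|c _ _ [x Ex <-] [y Ey <-]]; first by exists 0; [apply: lin0 | apply: f0].
  by exists (c *: x + y); [apply: lin_comb | apply: f_comb].
- by exists 1%:M; [apply: mxsubalg1 | apply: f1].
- by move=> _ _ [x Ex <-] [y Ey <-]; exists (x *m y); [apply: mxsubalgM | apply: fM].
Qed.

Lemma mxsubalg_horner (k : fieldType) n (E : 'M[k]_n.+1 -> Prop) (p : {poly k}) u :
  mxsubalg E -> E u -> E (horner_mx u p).
Proof.
move=> algE Eu; have linE := mxsubalg_lin algE.
elim/poly_ind: p => [|p c IH]; first by rewrite rmorph0; apply: lin0.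
rewrite rmorphD rmorphM /= horner_mx_X horner_mx_C.
by apply: linD => //; [apply: mxsubalgM | apply: mxsubalg_scalar].
Qed.

Lemma invmx_left (k : fieldType) n (A B : 'M[k]_n) : B *m A = 1%:M -> invmx A = B.
Proof.
move=> BA; have [_ UA] := mulmx1_unit BA.
by rewrite -[invmx A]mul1mx -BA -mulmxA mulmxV // mulmx1.
Qed.

(* By Cayley-Hamilton, [u * q(u) = -chi_u(0)] for a polynomial [q], and
   [chi_u(0)] is a unit when [u] is. *)
Lemma mxsubalg_invmx (k : fieldType) n (E : 'M[k]_n -> Prop) u :
  mxsubalg E -> E u -> u \in unitmx -> E (invmx u).
Proof.
case: n E u => [|n] E u algE Eu Uu.
  by rewrite (_ : invmx u = 1%:M); [apply: mxsubalg1 | apply/matrixP => -[]].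
set p := char_poly u.
have [q def_p] : exists q, p = q * 'X + (p`_0)%:P.
  have /factor_theorem [q Hq] : root (p - (p`_0)%:P) 0.
    by rewrite /root hornerD hornerN hornerC horner_coef0 subrr.
  by exists q; apply/eqP; rewrite -subr_eq Hq polyC0 subr0.
have p0_neq0 : p`_0 != 0.
  by rewrite /p char_poly_det mulf_eq0 negb_or signr_eq0 -unitfE -unitmxE.
have qu_u : horner_mx u q *m u = - (p`_0)%:M.
  apply/eqP; rewrite -subr_eq0 opprK; apply/eqP.
  by move: (Cayley_Hamilton u); rewrite -/p {1}def_p rmorphD rmorphM /= horner_mx_X horner_mx_C.
have -> : invmx u = - (p`_0)^-1 *: horner_mx u q.
  apply: invmx_left.
  by rewrite -scalemxAl qu_u scaleNr scalerN opprK scale_scalar_mx mulVf.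
by apply: linZ; [exact: mxsubalg_lin algE | exact: mxsubalg_horner].
Qed.

Definition mxalg_irreducible (k : fieldType) n (E : 'M[k]_n -> Prop) :=
  forall U : 'M[k]_n, (forall x, E x -> stablemx U x) -> U = 0 \/ row_full U.

Lemma mxalg_irr_cyclic (k : fieldType) n (E : 'M[k]_n -> Prop) (w : 'rV_n) :
  mxsubalg E -> mxalg_irreducible E -> w != 0 ->
  forall v, exists2 x, E x & v = w *m x.
Proof.
move=> algE irrE w_neq0.
pose S v := exists2 x, E x & v = w *m x.
have linS : lin_closed S.
  split; first by exists 0; [apply: lin0 (mxsubalg_lin algE) | rewrite mulmx0].
  move=> c _ _ [x Ex ->] [y Ey ->]; exists (c *: x + y).
    exact: lin_comb (mxsubalg_lin algE) _ _ _ Ex Ey.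
  by rewrite mulmxDr scalemxAr.
have [U defU] := lin_closed_rowspace linS.
have stabU x : E x -> stablemx U x.
  move=> Ex; apply/row_subP => i; rewrite row_mul.
  have [y Ey ->] : S (row i U) by apply/defU/row_sub.
  by apply/defU; exists (y *m x); [apply: mxsubalgM | rewrite mulmxA].
have [U0 | fullU] := irrE U stabU => v; last exact/defU/submx_full.
have : S w by exists 1%:M; [apply: mxsubalg1 | rewrite mulmx1].
by move/defU; rewrite U0 submx0 (negbTE w_neq0).
Qed.

Lemma mxsubalg_tr (k : fieldType) n (E : 'M[k]_n -> Prop) :
  mxsubalg E -> mxsubalg (fun x => E x^T).
Proof.
move=> algE; split.
- split=> [|c x y Ex Ey]; first by rewrite trmx0; apply: lin0 (mxsubalg_lin algE).
  by rewrite linearD linearZ /=; apply: lin_comb (mxsubalg_lin algE) _ _ _ Ex Ey.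
- by rewrite tr_scalar_mx; apply: mxsubalg1.
- by move=> x y Ex Ey; rewrite trmx_mul; apply: mxsubalgM.
Qed.

(* A subspace stable under [E^T] has an [E]-stable annihilator. *)
Lemma mxalg_irr_tr (k : fieldType) n (E : 'M[k]_n -> Prop) :
  mxalg_irreducible E -> mxalg_irreducible (fun x => E x^T).
Proof.
move=> irrE U stabU.
have stabK y : E y -> stablemx (kermx U^T) y.
  move=> Ey; apply/sub_kermxP; rewrite -mulmxA.
  have /submxP [D UyD] : stablemx U y^T by apply: stabU; rewrite trmxK.
  have -> : y *m U^T = U^T *m D^T by rewrite -[y]trmxK -trmx_mul UyD trmx_mul.
  by rewrite mulmxA mulmx_ker mul0mx.
have rkK := mxrank_ker U^T; rewrite mxrank_tr in rkK.
have := rank_leq_col U.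
case: (irrE _ stabK) => [K0 | /eqP fullK]; [right | left].
  by apply/eqP; move: rkK; rewrite K0 mxrank0; lia.
by apply/eqP; rewrite -mxrank_eq0; move: rkK; rewrite fullK; lia.
Qed.

Lemma stable_eigenvector (k : closedFieldType) r n (V : 'M[k]_(r, n)) f :
  row_free V -> (0 < r)%N -> stablemx V f ->
  exists2 y : 'rV_n, y != 0 & (y <= V)%MS /\ exists l, y *m f = l *: y.
Proof.
case: r V => // r V freeV _ stabV.
have [l] : exists l, root (char_poly (conjmx V f)) l.
  by apply/closed_rootP; rewrite size_char_poly.
rewrite -eigenvalue_root_char => /eigenvalueP [v vf v_neq0].
exists (v *m V); last split; [|exact: submxMl|].
  by apply: contra v_neq0; rewrite -(mul0mx _ V) => /eqP /(row_free_inj freeV) ->.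
by exists l; rewrite -mulmxA -(mulmxKpV stabV) mulmxA vf scalemxAl.
Qed.

Section Burnside.
Variables (k : closedFieldType) (n : nat) (E : 'M[k]_n -> Prop).
Hypotheses (algE : mxsubalg E) (irrE : mxalg_irreducible E).

(* With [row i T *m A = 'e_j] and [y = z *m T] an eigenvector of [A *m T] inside
   the row space of [T], the matrix [T *m (A *m T - l)] kills [z] but not
   row [i]. *)
Lemma mxalg_irr_rank_drop T : E T -> (1 < \rank T)%N ->
  exists2 T', E T' & (0 < \rank T' < \rank T)%N.
Proof.
move=> ET rkT.
have T_neq0 : T != 0 by rewrite -mxrank_gt0 ltnW.
have [i rowi_neq0] := nonzero_row T_neq0.
have [j rowjNi] : exists j, ~~ (row j T <= row i T)%MS.
  apply/existsP; apply: contraLR rkT => /existsPn rowsT.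
  have /mxrankS : (T <= row i T)%MS by apply/row_subP => j; apply/negbNE/rowsT.
  by rewrite -leqNgt => /leq_trans; apply; apply: rank_leq_row.
have [A EA rowiA] := mxalg_irr_cyclic algE irrE rowi_neq0 (delta_mx 0 j).
have stabT : stablemx (row_base T) (A *m T).
  by rewrite (eqmxMr _ (eq_row_base T)) eq_row_base mulmxA submxMl.
have [y y_neq0 [yT [l yAT]]] := stable_eigenvector (row_base_free T) (ltnW rkT) stabT.
have /submxP [z defy] : (y <= T)%MS by rewrite -(eq_row_base T).
pose T' := T *m A *m T - l *: T.
have ET' : E T'.
  have linE := mxsubalg_lin algE.
  by apply: linB => //; [apply: mxsubalgM => //; apply: mxsubalgM | apply: linZ].
have kerT_T' : (kermx T <= kermx T')%MS.
  apply/sub_kermxP; rewrite /T' mulmxBr -scalemxAr !mulmxA mulmx_ker.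
  by rewrite !mul0mx scaler0 subrr.
have zT' : (z <= kermx T')%MS.
  apply/sub_kermxP; rewrite /T' mulmxBr -scalemxAr !mulmxA -defy.
  by rewrite -mulmxA yAT subrr.
have zNkerT : ~~ (z <= kermx T)%MS.
  by apply: contra y_neq0 => /sub_kermxP; rewrite -defy => ->.
have ltKer : (\rank (kermx T) < \rank (kermx T'))%N.
  rewrite (ltn_leqif (mxrank_leqif_sup kerT_T')).
  by apply: contra zNkerT => /(submx_trans zT').
have rowiT' : row i T' = row j T - l *: row i T.
  by rewrite /T' linearB linearZ /= !row_mul -rowiA -rowE.
have T'_neq0 : T' != 0.
  apply: contraNneq rowjNi => T'0.
  by move: rowiT'; rewrite T'0 row0 => /eqP; rewrite eq_sym subr_eq0 => /eqP ->; apply: scalemx_sub.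
exists T' => //; rewrite mxrank_gt0 T'_neq0 /=.
by move: ltKer; rewrite !mxrank_ker; have := rank_leq_row T; have := rank_leq_row T'; lia.
Qed.

Lemma mxalg_irr_rank1 : (0 < n)%N -> exists2 T, E T & \rank T = 1%N.
Proof.
move=> n_gt0.
pose Ranks r := exists2 T, E T & \rank T = r /\ (0 < r)%N.
have Ranks_n : Ranks n by exists 1%:M; [apply: mxsubalg1 | rewrite mxrank1].
have [r [T ET [rkT r_gt0]] minr] := classic_ex_minn (ex_intro _ _ Ranks_n).
exists T => //; rewrite rkT; apply/eqP; rewrite eqn_leq r_gt0 andbT leqNgt.
apply/negP; rewrite -rkT => /(mxalg_irr_rank_drop ET) [T' ET' /andP [rkT'_gt0]].
by rewrite ltnNge rkT minr //; exists T'.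
Qed.

Theorem mxalg_irr_full a : E a.
Proof.
case: (posnP n) => [n0 | n_gt0].
  rewrite (_ : a = 1%:M); first exact: mxsubalg1.
  by apply/matrixP => i; have := ltn_ord i; rewrite {2}n0.
have [T ET rkT] := mxalg_irr_rank1 n_gt0.
have T_neq0 : T != 0 by rewrite -mxrank_eq0 rkT.
have [r rowr_neq0] := nonzero_row T_neq0.
have [z defT] : exists z, T = z *m row r T.
  apply/submxP; rewrite -(mxrank_leqif_sup (row_sub r T)) rkT.
  by rewrite rank_rV rowr_neq0.
have zT_neq0 : z^T != 0.
  by apply: contraNneq T_neq0; rewrite defT -trmx0 => /trmx_inj ->; rewrite mul0mx.
have Edelta i j : E (delta_mx i j).
  have [X EX zX] := mxalg_irr_cyclic (mxsubalg_tr algE) (mxalg_irr_tr irrE) zT_neq0 (delta_mx 0 i).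
  have [Y EY rY] := mxalg_irr_cyclic algE irrE rowr_neq0 (delta_mx 0 j).
  have -> : delta_mx i j = X^T *m T *m Y.
    rewrite defT !mulmxA -(trmxK z) -trmx_mul -zX trmx_delta -mulmxA -rY.
    by rewrite mul_delta_mx.
  by apply: mxsubalgM => //; apply: mxsubalgM.
exact: lin_closed_mx_full (mxsubalg_lin algE) Edelta a.
Qed.

End Burnside.

Section NilpotentMx.
Variable k : fieldType.

Definition nilpotent_mx n (x : 'M[k]_n) := exists m, x ^+ m = 0.

Lemma conjmx_exp n (u x : 'M[k]_n) j : u \in unitmx ->
  conjmx u (x ^+ j) = conjmx u x ^+ j.
Proof.
move=> Uu; elim: j => [|j IH]; first by rewrite !expr0 conjmx_scalar ?row_free_unit.
by rewrite !exprS -IH -!mulmxE -conjmxM ?inE ?stablemx_unit.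
Qed.

Lemma nilpotent_conjmx n (u x : 'M[k]_n) : u \in unitmx ->
  nilpotent_mx x -> nilpotent_mx (conjmx u x).
Proof. by move=> Uu [j xj]; exists j; rewrite -conjmx_exp // xj conjmx0. Qed.

Lemma conjmx_comb m n (V : 'M[k]_(m, n)) c x y :
  conjmx V (c *: x + y) = c *: conjmx V x + conjmx V y.
Proof. by rewrite /conjmx mulmxDr mulmxDl -scalemxAr -scalemxAl. Qed.

Definition strict_trig_mx n (x : 'M[k]_n) := forall i j : 'I_n, (i <= j)%N -> x i j = 0.

Lemma strict_trig_mx_lin n : lin_closed (@strict_trig_mx n).
Proof.
split=> [i j _|c x y x_trig y_trig i j le_ij]; first by rewrite mxE.
by rewrite !mxE x_trig // y_trig // mulr0 addr0.
Qed.

Lemma strict_trig_mx_exp n (x : 'M[k]_n) j (i l : 'I_n) :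
  strict_trig_mx x -> (i < l + j)%N -> (x ^+ j) i l = 0.
Proof.
move=> x_trig; elim: j i l => [|j IH] i l lt_ilj.
  by rewrite expr0 mxE; case: eqP => // eq_il; move: lt_ilj; rewrite eq_il addn0 ltnn.
rewrite exprS -mulmxE mxE big1 // => q _.
have [le_iq | lt_qi] := leqP i q; first by rewrite x_trig // mul0r.
by rewrite IH ?mulr0 //; move: lt_ilj lt_qi; rewrite addnS; lia.
Qed.

Lemma strict_trig_mx_nilpotent n (x : 'M[k]_n) : strict_trig_mx x -> x ^+ n = 0.
Proof.
move=> x_trig; apply/matrixP => i l; rewrite mxE strict_trig_mx_exp //.
by have := ltn_ord i; lia.
Qed.

Lemma row_free_completion r s (B : 'M[k]_(r, r + s)) : row_free B ->
  exists2 P : 'M_(r + s), P \in unitmx & usubmx P = B.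
Proof.
move=> freeB.
pose U : 'M[k]_(r, r + s) := row_mx 1%:M 0.
have UB : U *m col_mx B 0 = B by rewrite mul_row_col mul1mx mul0mx addr0.
have rkUB : \rank (U *m col_mx B 0) = \rank U.
  by apply/eqP; rewrite eqn_leq mxrankM_maxl UB (eqP freeB) rank_leq_row.
have [P UP defP] := complete_unitmx rkUB.
exists P => //.
by rewrite -UB defP -{2}[P]vsubmxK mul_row_col mul1mx mul0mx addr0.
Qed.

Section LowerBlock.
Variables m n : nat.
Implicit Types x y : 'M[k]_(m + n).

Lemma ulsubmx_comb c x y : ulsubmx (c *: x + y) = c *: ulsubmx x + ulsubmx y.
Proof. by apply/matrixP => i j; rewrite !mxE. Qed.

Lemma drsubmx_comb c x y : drsubmx (c *: x + y) = c *: drsubmx x + drsubmx y.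
Proof. by apply/matrixP => i j; rewrite !mxE. Qed.

Lemma ulsubmx0 : ulsubmx (0 : 'M[k]_(m + n)) = 0.
Proof. by apply/matrixP => i j; rewrite !mxE. Qed.

Lemma drsubmx0 : drsubmx (0 : 'M[k]_(m + n)) = 0.
Proof. by apply/matrixP => i j; rewrite !mxE. Qed.

Lemma ulsubmx_lblockM x y : ursubmx x = 0 ->
  ulsubmx (x *m y) = ulsubmx x *m ulsubmx y.
Proof.
move=> x_ur; rewrite -{1}[x]submxK -{1}[y]submxK x_ur mulmx_block block_mxKul.
by rewrite mul0mx addr0.
Qed.

Lemma drsubmx_lblockM x y : ursubmx y = 0 ->
  drsubmx (x *m y) = drsubmx x *m drsubmx y.
Proof.
move=> y_ur; rewrite -{1}[x]submxK -{1}[y]submxK y_ur mulmx_block block_mxKdr.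
by rewrite mulmx0 add0r.
Qed.

Lemma ursubmx_lblockM x y : ursubmx x = 0 -> ursubmx y = 0 -> ursubmx (x *m y) = 0.
Proof.
move=> x_ur y_ur; rewrite -[x]submxK -[y]submxK x_ur y_ur mulmx_block block_mxKur.
by rewrite mulmx0 mul0mx addr0.
Qed.

Lemma lblock1 :
  [/\ ursubmx (1%:M : 'M[k]_(m + n)) = 0, ulsubmx (1%:M : 'M[k]_(m + n)) = 1%:M
    & drsubmx (1%:M : 'M[k]_(m + n)) = 1%:M].
Proof. by rewrite (scalar_mx_block m n) block_mxKur block_mxKul block_mxKdr. Qed.

Lemma lblockX x j : ursubmx x = 0 ->
  [/\ ursubmx (x ^+ j) = 0, ulsubmx (x ^+ j) = ulsubmx x ^+ j
    & drsubmx (x ^+ j) = drsubmx x ^+ j].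
Proof.
move=> x_ur; elim: j => [|j [IHur IHul IHdr]]; first by rewrite !expr0; apply: lblock1.
rewrite !exprS ursubmx_lblockM // ulsubmx_lblockM // drsubmx_lblockM //.
by rewrite IHul IHdr.
Qed.

Lemma unitmx_lblock x : ursubmx x = 0 ->
  (x \in unitmx) = (ulsubmx x \in unitmx) && (drsubmx x \in unitmx).
Proof. by move=> x_ur; rewrite -{1}[x]submxK x_ur !unitmxE det_lblock unitrM. Qed.

Lemma invmx_lblock x : ursubmx x = 0 -> x \in unitmx -> ursubmx (invmx x) = 0 ->
  ulsubmx (invmx x) = invmx (ulsubmx x) /\ drsubmx (invmx x) = invmx (drsubmx x).
Proof.
move=> x_ur Ux xV_ur; have [_ ul1 dr1] := lblock1.
by split; apply/esym/invmx_left;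
  rewrite -?ulsubmx_lblockM -?drsubmx_lblockM // mulVmx // ?ul1 ?dr1.
Qed.

Lemma conjmx_lblock u x : u \in unitmx -> ursubmx u = 0 -> ursubmx (invmx u) = 0 ->
  ursubmx x = 0 ->
  [/\ ursubmx (conjmx u x) = 0, ulsubmx (conjmx u x) = conjmx (ulsubmx u) (ulsubmx x)
    & drsubmx (conjmx u x) = conjmx (drsubmx u) (drsubmx x)].
Proof.
move=> Uu u_ur uV_ur x_ur; have [ulV drV] := invmx_lblock u_ur Uu uV_ur.
have [Uul Udr] : ulsubmx u \in unitmx /\ drsubmx u \in unitmx.
  by apply/andP; rewrite -unitmx_lblock.
have ux_ur : ursubmx (u *m x) = 0 by apply: ursubmx_lblockM.
rewrite !conjumx // ursubmx_lblockM // ulsubmx_lblockM // drsubmx_lblockM //.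
by rewrite ulsubmx_lblockM // drsubmx_lblockM // ulV drV.
Qed.

Lemma nilpotent_lblock x : ursubmx x = 0 ->
  nilpotent_mx x <-> nilpotent_mx (ulsubmx x) /\ nilpotent_mx (drsubmx x).
Proof.
move=> x_ur; split=> [[j xj] | [[a ula] [b drb]]].
  have [_ ulj drj] := lblockX j x_ur.
  by split; exists j; rewrite -?ulj -?drj xj; apply/matrixP => ? ?; rewrite !mxE.
have [y_ur y_ul y_dr] := lblockX (a + b) x_ur.
exists ((a + b) * 2)%N; rewrite exprM expr2 -mulmxE.
move: y_ur y_ul y_dr; set y := x ^+ (a + b) => y_ur y_ul y_dr.
rewrite -[y]submxK y_ur y_ul y_dr exprD ula [_ ^+ (a + b)]exprD drb.
by rewrite mul0r mulr0 mulmx_block !mulmx0 !mul0mx !addr0 block_mx0.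
Qed.

End LowerBlock.

Lemma strict_trig_lblock n (c : 'M[k]_(n, 1)) d :
  strict_trig_mx d -> strict_trig_mx (block_mx 0 0 c d : 'M_(1 + n)).
Proof.
move=> d_trig i j; rewrite -(splitK i) -(splitK j).
case: (split i) => i'; case: (split j) => j' /= le_ij.
- by rewrite block_mxEul mxE.
- by rewrite block_mxEur mxE.
- by move: le_ij; have := ltn_ord j'; lia.
- by rewrite block_mxEdr d_trig //; move: le_ij; lia.
Qed.

Lemma nilpotent_mx_strict_trig n (a : 'M[k]_n) : nilpotent_mx a ->
  exists2 g, g \in unitmx & strict_trig_mx (conjmx g a).
Proof.
elim: n a => [|n IH] a nil_a; first by exists 1%:M => [|[]]; rewrite ?unitmx1.
have [w w_neq0 wa] : exists2 w : 'rV_(1 + n), w != 0 & w *m a = 0.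
  have : kermx a != 0.
    rewrite kermx_eq0 row_free_unit; case: nil_a => j aj; apply/negP => /(unitrX j).
    by rewrite aj unitmxE det0 unitr0.
  case/nonzero_row => i rowi_neq0; exists (row i (kermx a)) => //.
  by rewrite -row_mul mulmx_ker row0.
have freew : row_free (w : 'M_(1, 1 + n)) by rewrite /row_free rank_rV w_neq0.
have [P UP defP] := row_free_completion freew.
set a' := conjmx P a.
have a'_u : usubmx a' = 0 by rewrite /a' conjumx // -!mul_usub_mx defP wa !mul0mx.
have a'_ur : ursubmx a' = 0 by rewrite /ursubmx a'_u; apply/matrixP => ? ?; rewrite !mxE.
have a'_ul : ulsubmx a' = 0 by rewrite /ulsubmx a'_u; apply/matrixP => ? ?; rewrite !mxE.
have [_] := (nilpotent_lblock a'_ur).1 (nilpotent_conjmx UP nil_a).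
case/IH => h Uh h_trig.
pose Q : 'M[k]_(1 + n) := block_mx 1%:M 0 0 h.
have UQ : Q \in unitmx by rewrite block_diag_mx_unit unitmx1 Uh.
exists (Q *m P); first by rewrite unitmx_mul UQ UP.
have QV : invmx Q = block_mx 1%:M 0 0 (invmx h) by rewrite invmx_block_diag // invmx1.
rewrite conjuMumx // -/a' conjumx // QV /Q.
have -> : Q *m a' *m block_mx 1%:M 0 0 (invmx h)
          = block_mx 0 0 (h *m dlsubmx a') (conjmx h (drsubmx a')) :> 'M_(1 + n).
  rewrite -[a']submxK a'_ur a'_ul !mulmx_block conjumx // block_mxKdl block_mxKdr.
  by rewrite !(mulmx0, mul0mx, mul1mx, mulmx1, addr0, add0r).
exact: strict_trig_lblock.
Qed.

Lemma nilpotent_mx_size n (N : 'M[k]_n) : nilpotent_mx N -> N ^+ n = 0.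
Proof.
case/nilpotent_mx_strict_trig => g Ug /strict_trig_mx_nilpotent.
by rewrite -conjmx_exp // => /(congr1 (conjmx (invmx g))); rewrite conjmxK // conjmx0.
Qed.

End NilpotentMx.

Lemma delta_mx_sandwich (k : fieldType) m (A : 'M[k]_m) (i p q j : 'I_m) :
  delta_mx i p *m A *m delta_mx q j = A p q *: delta_mx i j.
Proof.
rewrite -(mul_delta_mx (0 : 'I_1) i p) -(mul_delta_mx (0 : 'I_1) q j).
rewrite -!mulmxA (mulmxA (delta_mx 0 p)) -rowE (mulmxA (row p A)) -colE.
by rewrite [col q _]mx11_scalar !mxE mul_scalar_mx -scalemxAr mul_delta_mx.
Qed.

Lemma mx_ideal_full (k : fieldType) m (I : 'M[k]_m -> Prop) x0 :
  lin_closed I -> (forall a b x, I x -> I (a *m x *m b)) -> I x0 -> x0 != 0 ->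
  forall a, I a.
Proof.
move=> linI idealI Ix0 x0_neq0 a.
have [[p q] /= x0pq_neq0] : exists pq : 'I_m * 'I_m, x0 pq.1 pq.2 != 0.
  apply/existsP; apply: contraR x0_neq0 => /existsPn x0_0.
  by apply/eqP/matrixP => p q; rewrite mxE; apply/eqP/negbNE/(x0_0 (p, q)).
apply: (lin_closed_mx_full linI) => i j.
have := linZ linI (x0 p q)^-1 (idealI (delta_mx i p) (delta_mx q j) _ Ix0).
by rewrite delta_mx_sandwich scalerA mulVf // scale1r.
Qed.

Section NilSection.
Variables (k : fieldType) (n : nat).

Definition nil_section (E L : 'M[k]_n -> Prop) :=
  [/\ lin_closed L, forall x, L x -> E x /\ nilpotent_mx x
    & forall N, E N -> nilpotent_mx N ->
        exists u, [/\ E u, u \in unitmx & L (conjmx u N)]].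

Lemma mxsubalg_conj (E : 'M[k]_n -> Prop) P : P \in unitmx ->
  mxsubalg E -> mxsubalg (fun y => E (conjmx P y)).
Proof.
move=> UP algE; have linE := mxsubalg_lin algE; split.
- split=> [|c x y Ex Ey]; first by rewrite conjmx0; apply: lin0.
  by rewrite conjmx_comb; apply: lin_comb.
- by rewrite conjmx_scalar ?row_free_unit //; apply: mxsubalg1.
- by move=> x y Ex Ey; rewrite conjmxM ?inE ?stablemx_unit //; apply: mxsubalgM.
Qed.

Lemma nil_section_conj (E L : 'M[k]_n -> Prop) P : P \in unitmx ->
  nil_section (fun y => E (conjmx (invmx P) y)) L ->
  nil_section E (fun x => L (conjmx P x)).
Proof.
move=> UP [[L0 linL] L_nil L_conj]; have UPV : invmx P \in unitmx by rewrite unitmx_inv.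
split.
- split=> [|c x y Lx Ly]; first by rewrite conjmx0.
  by rewrite conjmx_comb; apply: linL.
- move=> x /L_nil []; rewrite conjmxK // => Ex /(nilpotent_conjmx UPV).
  by rewrite conjmxK.
- move=> N EN /(nilpotent_conjmx UP) nilPN.
  have [|u' [Eu' Uu' Lu']] := L_conj _ _ nilPN; first by rewrite conjmxK.
  have defu : conjmx (invmx P) u' = invmx P *m u' *m P by rewrite conjumx // invmxK.
  exists (conjmx (invmx P) u'); split=> //; rewrite defu; first by rewrite !unitmx_mul UPV Uu'.
  by rewrite -conjuMumx ?unitmx_mul ?UPV ?Uu' // !mulmxA mulmxV // mul1mx conjuMumx.
Qed.

End NilSection.

Section LowerBlockNilSection.
Variables (k : fieldType) (m n : nat) (E : 'M[k]_(m + n) -> Prop).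
Hypotheses (algE : mxsubalg E) (E_ur : forall x, E x -> ursubmx x = 0).

Lemma mxsubalg_ulsubmx : mxsubalg (fun a => exists2 x, E x & ulsubmx x = a).
Proof.
have [_ ul1 _] := lblock1 k m n.
apply: (mxsubalg_image algE (ulsubmx0 k m n) ul1 (@ulsubmx_comb k m n)).
by move=> x y Ex _; apply: ulsubmx_lblockM (E_ur Ex).
Qed.

Lemma mxsubalg_drsubmx : mxsubalg (fun d => exists2 x, E x & drsubmx x = d).
Proof.
have [_ _ dr1] := lblock1 k m n.
apply: (mxsubalg_image algE (drsubmx0 k m n) dr1 (@drsubmx_comb k m n)).
by move=> x y _ Ey; apply: drsubmx_lblockM (E_ur Ey).
Qed.

Lemma lblock_conj u x : E u -> u \in unitmx -> E x ->
  [/\ E (conjmx u x), ulsubmx (conjmx u x) = conjmx (ulsubmx u) (ulsubmx x)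
    & drsubmx (conjmx u x) = conjmx (drsubmx u) (drsubmx x)].
Proof.
move=> Eu Uu Ex; have EuV := mxsubalg_invmx algE Eu Uu.
have [_ -> ->] := conjmx_lblock Uu (E_ur Eu) (E_ur EuV) (E_ur Ex).
by split=> //; rewrite conjumx //; apply: mxsubalgM => //; apply: mxsubalgM.
Qed.

Hypothesis E_ul : forall a, exists2 x, E x & ulsubmx x = a.

Lemma lblock_ideal_full x0 : E x0 -> drsubmx x0 = 0 -> ulsubmx x0 != 0 ->
  forall a, exists2 x, E x & drsubmx x = 0 /\ ulsubmx x = a.
Proof.
move=> Ex0 x0_dr x0_ul; have linE := mxsubalg_lin algE.
apply: (mx_ideal_full _ _ (ex_intro2 _ _ x0 Ex0 (conj x0_dr erefl)) x0_ul).
  split=> [|c _ _ [x Ex [xdr <-]] [y Ey [ydr <-]]].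
    by exists 0; [apply: lin0 | rewrite ulsubmx0 drsubmx0].
  exists (c *: x + y); first exact: lin_comb.
  by rewrite ulsubmx_comb drsubmx_comb xdr ydr scaler0 addr0.
move=> a b _ [x Ex [xdr <-]]; have [[ya Eya <-] [yb Eyb <-]] := (E_ul a, E_ul b).
exists (ya *m x *m yb); first by apply: mxsubalgM => //; apply: mxsubalgM.
rewrite !ulsubmx_lblockM ?drsubmx_lblockM ?ursubmx_lblockM ?E_ur //.
by rewrite xdr mulmx0 mul0mx.
Qed.

Variable L2 : 'M[k]_n -> Prop.
Hypothesis secL2 : nil_section (fun d => exists2 x, E x & drsubmx x = d) L2.

Lemma lblock_nil_section_ideal x0 : E x0 -> drsubmx x0 = 0 -> ulsubmx x0 != 0 ->
  nil_section E (fun x => [/\ E x, strict_trig_mx (ulsubmx x) & L2 (drsubmx x)]).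
Proof.
move=> Ex0 x0_dr x0_ul; have [[L2_0 linL2] L2_nil L2_conj] := secL2.
have linE := mxsubalg_lin algE.
split.
- split=> [|c x y [Ex xul xdr] [Ey yul ydr]].
    split; [exact: lin0 | rewrite ulsubmx0 | by rewrite drsubmx0].
    exact: lin0 (strict_trig_mx_lin _ _).
  split; first exact: lin_comb.
    by rewrite ulsubmx_comb; apply: lin_comb (strict_trig_mx_lin _ _) _ _ _ xul yul.
  by rewrite drsubmx_comb; apply: linL2.
- move=> x [Ex xul xdr]; split=> //; apply/(nilpotent_lblock (E_ur Ex)); split.
    by exists m; apply: strict_trig_mx_nilpotent.
  by have [_] := L2_nil _ xdr.
- move=> N EN /(nilpotent_lblock (E_ur EN)) [nil_ul nil_dr].
  have [g Ug g_trig] := nilpotent_mx_strict_trig nil_ul.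
  have [|u2 [[x1 Ex1 <-] Uu2 Lu2]] := L2_conj (drsubmx N) _ nil_dr; first by exists N.
  have [x2 Ex2 [x2_dr x2_ul]] := lblock_ideal_full Ex0 x0_dr x0_ul (g - ulsubmx x1).
  pose u := x1 + x2.
  have Eu : E u by apply: linD.
  have u_ul : ulsubmx u = g.
    by rewrite /u -[x1]scale1r ulsubmx_comb scale1r x2_ul addrC subrK.
  have u_dr : drsubmx u = drsubmx x1.
    by rewrite /u -{1}[x1]scale1r drsubmx_comb scale1r x2_dr addr0.
  have Uu : u \in unitmx by rewrite unitmx_lblock ?E_ur // u_ul u_dr Ug Uu2.
  have [ENu Nu_ul Nu_dr] := lblock_conj Eu Uu EN.
  by exists u; split=> //; split=> //; rewrite ?Nu_ul ?Nu_dr ?u_ul ?u_dr.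
Qed.

Lemma lblock_nil_section_graph :
  (forall x, E x -> drsubmx x = 0 -> ulsubmx x = 0) ->
  nil_section E (fun x => E x /\ L2 (drsubmx x)).
Proof.
move=> graphE; have [[L2_0 linL2] L2_nil L2_conj] := secL2.
have linE := mxsubalg_lin algE.
split.
- split=> [|c x y [Ex xdr] [Ey ydr]]; first by split; [apply: lin0 | rewrite drsubmx0].
  by split; [apply: lin_comb | rewrite drsubmx_comb; apply: linL2].
- move=> x [Ex /L2_nil [_ [j xj]]]; split=> //.
  apply/(nilpotent_lblock (E_ur Ex)); split; last by exists j.
  have [_ ulj drj] := lblockX j (E_ur Ex).
  by exists j; rewrite -ulj; apply: graphE; [apply: mxsubalgX | rewrite drj].
- move=> N EN /(nilpotent_lblock (E_ur EN)) [_ nil_dr].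
  have [|u2 [[x1 Ex1 <-] Uu2 Lu2]] := L2_conj (drsubmx N) _ nil_dr; first by exists N.
  have [y Ey yV] := mxsubalg_invmx mxsubalg_drsubmx (ex_intro2 _ _ x1 Ex1 erefl) Uu2.
  have [_ ul1 dr1] := lblock1 k m n.
  have : ulsubmx ((-1) *: (x1 *m y) + 1%:M) = 0.
    apply: graphE; first exact: lin_comb linE _ _ _ (mxsubalgM algE Ex1 Ey) (mxsubalg1 algE).
    by rewrite drsubmx_comb drsubmx_lblockM ?E_ur // yV mulmxV // dr1 scaleN1r addNr.
  rewrite ulsubmx_comb ulsubmx_lblockM ?E_ur // ul1 scaleN1r addrC => /eqP.
  rewrite subr_eq0 => /eqP /esym /mulmx1_unit [Uul _].
  have Ux1 : x1 \in unitmx by rewrite unitmx_lblock ?E_ur // Uul Uu2.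
  have [ENx1 _ Nx1_dr] := lblock_conj Ex1 Ux1 EN.
  by exists x1; split=> //; split=> //; rewrite Nx1_dr.
Qed.

Lemma lblock_nil_section : exists L, nil_section E L.
Proof.
have [[x0 [Ex0 x0_dr x0_ul]] | no_x0] :=
  classic (exists x0, [/\ E x0, drsubmx x0 = 0 & ulsubmx x0 != 0]).
  by eexists; apply: lblock_nil_section_ideal Ex0 x0_dr x0_ul.
eexists; apply: lblock_nil_section_graph => x Ex x_dr.
by apply/eqP; apply: contraT => x_ul; case: no_x0; exists x.
Qed.

End LowerBlockNilSection.

Section StableSubspace.
Variables (k : fieldType) (m n : nat).

Lemma stable_conjmx_lblock (P x : 'M[k]_(m + n)) : P \in unitmx ->
  stablemx (usubmx P) x ->
  ursubmx (conjmx P x) = 0 /\ usubmx P *m x = ulsubmx (conjmx P x) *m usubmx P.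
Proof.
move=> UP /submxP [D PxD].
have Px_u : usubmx (conjmx P x) = row_mx D 0.
  rewrite conjumx // -!mul_usub_mx PxD -mulmxA mul_usub_mx mulmxV //.
  by rewrite (scalar_mx_block m n) /block_mx col_mxKu mul_mx_row mulmx1 mulmx0.
by rewrite /ursubmx /ulsubmx Px_u row_mxKr row_mxKl.
Qed.

Variables (E : 'M[k]_(m + n) -> Prop) (P : 'M[k]_(m + n)).
Hypotheses (UP : P \in unitmx) (freeP : row_free (usubmx P)).
Hypothesis stableP : forall x, E x -> stablemx (usubmx P) x.
Hypothesis minP : forall r (B : 'M[k]_(r, m + n)),
  row_free B -> (0 < r)%N -> (forall x, E x -> stablemx B x) -> (m <= r)%N.

Lemma conjmx_stable_lblock y : E (conjmx (invmx P) y) -> ursubmx y = 0.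
Proof. by move/stableP/(stable_conjmx_lblock UP) => []; rewrite conjmxVK. Qed.

(* A [U] stable under the upper-left blocks gives the [E]-stable subspace
   [U *m usubmx P] of the same rank, so [minP] forces [U = 0] or [row_full U]. *)
Lemma conjmx_stable_ul_irreducible :
  mxalg_irreducible (fun a => exists2 y, E (conjmx (invmx P) y) & ulsubmx y = a).
Proof.
move=> U stabU.
have stabUB x : E x -> stablemx (U *m usubmx P) x.
  move=> Ex; have [_ Px] := stable_conjmx_lblock UP (stableP Ex).
  rewrite -mulmxA Px mulmxA submxMr //; apply: stabU.
  by exists (conjmx P x); rewrite ?conjmxK.
have rkUB : \rank (U *m usubmx P) = \rank U.
  exact: mxrankMfree.
have [U0 | U_neq0] := eqVneq U 0; [by left | right].
have le_m : (m <= \rank U)%N.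
  rewrite -rkUB; apply: (minP (row_base_free _)); first by rewrite rkUB mxrank_gt0.
  by move=> x Ex; rewrite (eqmxMr _ (eq_row_base _)) !eq_row_base; apply: stabUB.
by rewrite /row_full eqn_leq rank_leq_col.
Qed.

End StableSubspace.

Lemma minimal_stable_subspace (k : fieldType) n (E : 'M[k]_n -> Prop) : (0 < n)%N ->
  exists m (B : 'M[k]_(m, n)),
    [/\ row_free B, (0 < m)%N, forall x, E x -> stablemx B x
      & forall r (C : 'M[k]_(r, n)),
          row_free C -> (0 < r)%N -> (forall x, E x -> stablemx C x) -> (m <= r)%N].
Proof.
move=> n_gt0.
pose Stable r := exists B : 'M[k]_(r, n),
  [/\ row_free B, (0 < r)%N & forall x, E x -> stablemx B x].
have Stable_n : Stable n.
  exists 1%:M; split; rewrite ?row_free_unit ?unitmx1 // => x _.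
  by apply: submx_full; rewrite row_full_unit unitmx1.
have [m [B [freeB m_gt0 stableB]] minB] := classic_ex_minn (ex_intro _ _ Stable_n).
by exists m, B; split=> // r C freeC r_gt0 stableC; apply: minB; exists C.
Qed.

Lemma nil_section0 (k : fieldType) (E : 'M[k]_0 -> Prop) :
  mxsubalg E -> nil_section E (fun _ => True).
Proof.
move=> algE; have x0 (x : 'M[k]_0) : x = 0 by apply/matrixP => -[].
split=> // [x _|N _ _].
  by rewrite (x0 x); split; [apply: lin0 (mxsubalg_lin algE) | exists 1%N; rewrite expr1].
by exists 1%:M; split; rewrite ?unitmx1 //; apply: mxsubalg1.
Qed.

Theorem mxsubalg_nil_section (k : closedFieldType) n (E : 'M[k]_n -> Prop) :
  mxsubalg E -> exists L, nil_section E L.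
Proof.
elim/ltn_ind: n E => n IH E algE.
have [n0 | n_gt0] := posnP n; first by subst n; exists (fun _ => True); apply: nil_section0.
have [m [B [freeB m_gt0 stableB minB]]] := minimal_stable_subspace E n_gt0.
have [n' def_n] : exists n', n = (m + n')%N.
  by exists (n - m)%N; rewrite subnKC // -(eqP freeB) rank_leq_col.
subst n.
have [P UP defP] := row_free_completion freeB.
pose E' y := E (conjmx (invmx P) y).
have algE' : mxsubalg E' by apply: mxsubalg_conj; rewrite ?unitmx_inv.
have stableP x : E x -> stablemx (usubmx P) x by rewrite defP; apply: stableB.
have E'_ur := conjmx_stable_lblock UP stableP.
have [|L2 secL2] := IH n' _ _ (mxsubalg_drsubmx algE' E'_ur).
  by rewrite -[n']add0n ltn_add2r.
have freeP : row_free (usubmx P) by rewrite defP.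
have irrE' := conjmx_stable_ul_irreducible UP freeP stableP minB.
have E'_ul := mxalg_irr_full (mxsubalg_ulsubmx algE' E'_ur) irrE'.
have [L' secL'] := lblock_nil_section algE' E'_ur E'_ul secL2.
by exists (fun x => L' (conjmx P x)); apply: nil_section_conj.
Qed.

Lemma map_mxX (R S : comNzRingType) (f : {rmorphism R -> S}) n (A : 'M[R]_n) j :
  map_mx f (A ^+ j) = map_mx f A ^+ j.
Proof.
elim: j => [|j IH]; first by rewrite !expr0 map_mx1.
by rewrite !exprS -!mulmxE map_mxM IH.
Qed.

Lemma horner_mmap (R : comNzRingType) N (h : 'I_N -> {poly R}) (p : {mpoly R[N]}) t :
  (mmap polyC h p).[t] = p.@[fun i => (h i).[t]].
Proof.
rewrite mevalE horner_sum; apply: eq_bigr => m _.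
rewrite hornerM hornerC horner_prod; congr (_ * _); apply: eq_bigr => i _.
exact: horner_exp.
Qed.

Section Zariski.
Variables (k : fieldType) (n : nat).

Definition generic_mx : 'M[{mpoly k[n * n]}]_n := \matrix_(i, j) 'X_(mxvec_index i j).

Lemma meval_generic_mx (M : 'M[k]_n) : map_mx (meval (mx_coords M)) generic_mx = M.
Proof. by apply/matrixP => i j; rewrite !mxE mevalXU /mx_coords mxvecE. Qed.

Lemma meval_const_mx (M B : 'M[k]_n) :
  map_mx (meval (mx_coords M)) (map_mx (fun c => c%:MP_[n * n]) B) = B.
Proof. by apply/matrixP => i j; rewrite !mxE mevalC. Qed.

Lemma zariski_closed_mx_zeros I p q (F : I -> 'M[{mpoly k[n * n]}]_(p, q)) :
  zariski_closed (fun M => forall i, map_mx (meval (mx_coords M)) (F i) = 0).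
Proof.
exists (fun r => exists i j l, r = F i j l) => M; split.
  by move=> MF _ [i [j [l ->]]]; have /matrixP/(_ j l) := MF i; rewrite !mxE.
by move=> MF i; apply/matrixP => j l; rewrite !mxE; apply: MF; exists i, j, l.
Qed.

Lemma zariski_closed_separate (Z : 'M[k]_n -> Prop) M : zariski_closed Z -> ~ Z M ->
  exists2 p : {mpoly k[n * n]}, forall N, Z N -> p.@[mx_coords N] = 0
                               & p.@[mx_coords M] != 0.
Proof.
case=> F defZ ZNM; apply: NNPP => no_p; apply/ZNM/defZ => p Fp.
apply: NNPP => /eqP pM; apply: no_p; exists p => // N /defZ; exact.
Qed.

End Zariski.

(* [p * 'X + 1] has a root, which is impossible unless [p = 0]. *)
Lemma closed_poly_eq0 (k : closedFieldType) (p : {poly k}) : (forall t, p.[t] = 0) -> p = 0.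
Proof.
move=> p0; apply/eqP; apply: contraT => p_neq0.
have : size (p * 'X + 1%:P) != 1%N by rewrite size_MXaddC (negbTE p_neq0) /= eqSS size_poly_eq0.
case/closed_rootP => t; rewrite /root hornerMXaddC p0 mul0r add0r.
by rewrite oner_eq0.
Qed.

Lemma zariski_irreducible_curves (k : closedFieldType) n (S : 'M[k]_n -> Prop) :
  (exists M, S M) ->
  (forall M N, S M -> S N -> exists (G : 'M[{poly k}]_n) (d : {poly k}),
     [/\ d.[0] != 0 /\ map_mx (horner_eval 0) G = M,
         d.[1] != 0 /\ map_mx (horner_eval 1) G = N
       & forall t, d.[t] != 0 -> S (map_mx (horner_eval t) G)]) ->
  zariski_irreducible S.
Proof.
move=> S_neq0 curveS; split=> // Z1 Z2 closedZ1 closedZ2 coverS.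
have [allZ1 | notZ1] := classic (forall M, S M -> Z1 M); first by left.
right; apply: NNPP => notZ2.
have [M /(imply_to_and (S M)) [SM Z1M]] := not_all_ex_not _ _ notZ1.
have [N /(imply_to_and (S N)) [SN Z2N]] := not_all_ex_not _ _ notZ2.
have [p1 p1Z1 p1M] := zariski_closed_separate closedZ1 Z1M.
have [p2 p2Z2 p2N] := zariski_closed_separate closedZ2 Z2N.
have [G [d [[d0 G0] [d1 G1] SG]]] := curveS M N SM SN.
pose Gp p := mmap polyC (fun l => mxvec G 0 l) p.
have GpE p t : (Gp p).[t] = p.@[mx_coords (map_mx (horner_eval t) G)].
  by rewrite horner_mmap /mx_coords -map_mxvec; apply: meval_eq => l; rewrite mxE.
have : Gp p1 * Gp p2 * d = 0.
  apply: closed_poly_eq0 => t; rewrite !hornerM.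
  have [-> | /SG /coverS [/p1Z1 | /p2Z2] Gt0] := eqVneq d.[t] 0; first by rewrite mulr0.
    by rewrite GpE Gt0 !mul0r.
  by rewrite (GpE p2) Gt0 mulr0 mul0r.
move/eqP; rewrite !mulf_eq0 => /orP [/orP [] | ] /eqP Gp0.
- by move: p1M; rewrite -G0 -GpE Gp0 horner0 eqxx.
- by move: p2N; rewrite -G1 -GpE Gp0 horner0 eqxx.
- by move: d0; rewrite Gp0 horner0 eqxx.
Qed.

Lemma adj_unitmx (k : fieldType) n (v : 'M[k]_n) : v \in unitmx -> \adj v = \det v *: invmx v.
Proof.
move=> Uv; rewrite /invmx Uv scalerA mulfV ?scale1r //.
by move: Uv; rewrite unitmxE unitfE.
Qed.

Lemma nilpotent_mxZ (k : fieldType) n (c : k) (x : 'M[k]_n) :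
  nilpotent_mx x -> nilpotent_mx (c *: x).
Proof.
case=> j xj; exists j; suff -> : (c *: x) ^+ j = c ^+ j *: x ^+ j by rewrite xj scaler0.
elim: j {xj} => [|j IH]; first by rewrite !expr0 scale1r.
by rewrite !exprS -!mulmxE IH -scalemxAl -scalemxAr scalerA.
Qed.

Definition mx_segment (k : fieldType) p q (a b : 'M[k]_(p, q)) : 'M[{poly k}]_(p, q) :=
  map_mx polyC a + 'X *: map_mx polyC (b - a).

Lemma horner_mx_segment (k : fieldType) p q (a b : 'M[k]_(p, q)) t :
  map_mx (horner_eval t) (mx_segment a b) = a + t *: (b - a).
Proof. by apply/matrixP => i j; rewrite !mxE /= horner_evalE hornerD hornerM hornerX !hornerC. Qed.

Section NilSectionCurves.
Variables (k : fieldType) (n : nat) (E L : 'M[k]_n -> Prop).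
Hypotheses (algE : mxsubalg E) (secL : nil_section E L).

Lemma nil_section_adj N : E N -> nilpotent_mx N ->
  exists v y, [/\ E v, v \in unitmx, L y & N = v *m y *m \adj v].
Proof.
case: secL => _ _ L_conj EN /(L_conj _ EN) [u [Eu Uu Lu]].
have UuV : invmx u \in unitmx by rewrite unitmx_inv.
have detuV_neq0 : \det (invmx u) != 0 by rewrite -unitfE -unitmxE.
exists (invmx u), ((\det (invmx u))^-1 *: conjmx u N); split.
- exact: mxsubalg_invmx.
- exact: UuV.
- by case: secL => linL _ _; apply: linZ.
rewrite adj_unitmx // invmxK -!scalemxAr -scalemxAl scalerA mulfV // scale1r.
by rewrite conjumx // !mulmxA mulVmx // mul1mx mulmxKV.
Qed.

Lemma nil_section_curve M N : E M -> nilpotent_mx M -> E N -> nilpotent_mx N ->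
  exists (G : 'M[{poly k}]_n) (d : {poly k}),
    [/\ d.[0] != 0 /\ map_mx (horner_eval 0) G = M,
        d.[1] != 0 /\ map_mx (horner_eval 1) G = N
      & forall t, d.[t] != 0 ->
          E (map_mx (horner_eval t) G) /\ nilpotent_mx (map_mx (horner_eval t) G)].
Proof.
move=> EM nilM EN nilN.
have [v1 [y1 [Ev1 Uv1 Ly1 ->]]] := nil_section_adj EM nilM.
have [v2 [y2 [Ev2 Uv2 Ly2 ->]]] := nil_section_adj EN nilN.
have linE := mxsubalg_lin algE; have [linL L_nil _] := secL.
pose v t := v1 + t *: (v2 - v1); pose y t := y1 + t *: (y2 - y1).
exists (mx_segment v1 v2 *m mx_segment y1 y2 *m \adj (mx_segment v1 v2)).
exists (\det (mx_segment v1 v2)).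
have Gt t : map_mx (horner_eval t) (mx_segment v1 v2 *m mx_segment y1 y2 *m \adj (mx_segment v1 v2))
            = v t *m y t *m \adj (v t).
  by rewrite !map_mxM map_mx_adj !horner_mx_segment.
have dt t : (\det (mx_segment v1 v2)).[t] = \det (v t).
  by rewrite -horner_evalE -det_map_mx horner_mx_segment.
have v0 : v 0 = v1 by rewrite /v scale0r addr0.
have v1' : v 1 = v2 by rewrite /v scale1r addrC subrK.
have y0 : y 0 = y1 by rewrite /y scale0r addr0.
have y1' : y 1 = y2 by rewrite /y scale1r addrC subrK.
have [d1 d2] : \det v1 != 0 /\ \det v2 != 0 by rewrite -!unitfE -!unitmxE.
split; [by rewrite dt Gt v0 y0 | by rewrite dt Gt v1' y1' | move=> t].
rewrite dt Gt -unitfE -unitmxE => Uvt.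
have Evt : E (v t) by rewrite /v addrC; apply: lin_comb => //; apply: linB.
have [Eyt nilyt] : E (y t) /\ nilpotent_mx (y t).
  by apply: L_nil; rewrite /y addrC; apply: lin_comb => //; apply: linB.
rewrite adj_unitmx // -scalemxAr -conjumx //; split; last first.
  exact/nilpotent_mxZ/nilpotent_conjmx.
apply: linZ => //; rewrite conjumx //.
by apply: mxsubalgM => //; [apply: mxsubalgM | apply: mxsubalg_invmx].
Qed.

End NilSectionCurves.

Section NEnd.
Variables (k : fieldType) (A : falgType k) (n : nat) (rho : A -> 'M[k]_n).

Lemma mxsubalg_End : mxsubalg (is_End rho).
Proof.
split; rewrite /is_End.
- split=> [a|c x y Ex Ey a]; first by rewrite mul0mx mulmx0.
  by rewrite mulmxDl mulmxDr -scalemxAl -scalemxAr Ex Ey.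
- by move=> a; rewrite mul1mx mulmx1.
- by move=> x y Ex Ey a; rewrite -mulmxA Ey !mulmxA Ex.
Qed.

Lemma mxpowE (N : 'M[k]_n) m : mxpow N m = N ^+ m.
Proof. by elim: m => [|m IH]; rewrite ?expr0 // exprS /mxpow iterS -/(mxpow N m) IH. Qed.

Lemma NEndE N : NEnd rho N <-> is_End rho N /\ nilpotent_mx N.
Proof.
by rewrite /NEnd /nilpotent_mx; split=> -[EN [m Nm]]; split=> //; exists m; rewrite ?mxpowE in Nm *.
Qed.

Lemma zariski_closed_NEnd : zariski_closed (NEnd rho).
Proof.
pose C a := map_mx (fun c => c%:MP_[n * n]) (rho a).
have [F defNEnd] := zariski_closed_mx_zeros
  (fun o => if o is Some a then generic_mx k n *m C a - C a *m generic_mx k n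
            else generic_mx k n ^+ n).
exists F => M; rewrite -defNEnd NEndE; split.
- move=> [EM nilM] [a|] /=; rewrite ?map_mxX ?map_mxB ?map_mxM meval_generic_mx ?meval_const_mx.
    by rewrite EM subrr.
  exact: nilpotent_mx_size.
- move=> Mzero; split=> [a|]; last first.
    by exists n; have := Mzero None; rewrite /= map_mxX meval_generic_mx.
  apply/eqP; rewrite -subr_eq0; have := Mzero (Some a).
  by rewrite /= map_mxB !map_mxM meval_generic_mx meval_const_mx => ->.
Qed.

End NEnd.

Theorem lemma2p1 (k : closedFieldType) (A : falgType k) (n : nat)
  (rho : A -> 'M[k]_n) (Hrho : is_module_rep rho) :
  irreducible_variety (NEnd rho).
Proof.
split; first exact: zariski_closed_NEnd.
have [L secL] := mxsubalg_nil_section (mxsubalg_End rho).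
apply: zariski_irreducible_curves => [|M N /NEndE [EM nilM] /NEndE [EN nilN]].
  exists 0; apply/NEndE; split; first exact: lin0 (mxsubalg_lin (mxsubalg_End rho)).
  by exists 1%N; rewrite expr1.
have [G [d [G0 G1 Gt]]] := nil_section_curve (mxsubalg_End rho) secL EM nilM EN nilN.
by exists G, d; split=> // t /Gt /NEndE.
Qed.
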